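(* Let $C$ be a copula and $p_0,q_0,q\in[0,1]$ with $q\neq q_0$. If $\lambda^C(q_0|p_0)$ and $\lambda^C(q|p_0)$ exist, then $$\lambda^C(q_0|p_0)+\lambda^C(q|p_0)\le 1.$$
   Context: For a copula $C$ (bivariate distribution function on $[0,1]^2$ with uniform margins) and $p,q\in[0,1]$, let $(U,V)$ have joint distribution function $C$; the $(p,q)$-quantile dependence coefficient is $\lambda^C(q|p)=\lim_{t\to0^+}P((q-t)^+<V\le(q+t)^-\mid (p-t)^+<U\le(p+t)^-)$ when the limit exists, where $a^+=\max(a,0)$ and $a^-=1-(1-a)^+$. *)

From Stdlib Require Import Reals.
From Coquelicot Require Import Coquelicot.
Open Scope R_scope.

Definition is_copula (C : R -> R -> R) : Prop :=
  (forall u, 0 <= u <= 1 -> C u 0 = 0 /\ C 0 u = 0 /\ C u 1 = u /\ C 1 u = u) /\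
  (forall u1 u2 v1 v2, 0 <= u1 -> u1 <= u2 -> u2 <= 1 ->
     0 <= v1 -> v1 <= v2 -> v2 <= 1 ->
     0 <= C u2 v2 - C u1 v2 - C u2 v1 + C u1 v1).

Definition pos_part (a : R) : R := Rmax a 0.
Definition neg_trunc (a : R) : R := 1 - pos_part (1 - a).

(* P(a < U <= b, c < V <= d) for (U,V) with joint distribution function C *)
Definition C_vol (C : R -> R -> R) (a b c d : R) : R :=
  C b d - C a d - C b c + C a c.

(* P((q-t)^+ < V <= (q+t)^- | (p-t)^+ < U <= (p+t)^-), where
   P((p-t)^+ < U <= (p+t)^-) = (p+t)^- - (p-t)^+ since U is uniform. *)
Definition cond_prob (C : R -> R -> R) (p q t : R) : R :=
  C_vol C (pos_part (p - t)) (neg_trunc (p + t))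
          (pos_part (q - t)) (neg_trunc (q + t))
  / (neg_trunc (p + t) - pos_part (p - t)).

Definition qdc_is (C : R -> R -> R) (p q l : R) : Prop :=
  filterlim (fun t => cond_prob C p q t) (at_right 0) (locally l).

(** Proof idea: once [t] is smaller than half the distance between [q0] and [q],
    the two windows around [q0] and [q] are disjoint, so the two [C]-volumes of the
    strip over the window around [p0] are disjoint pieces of the whole strip, whose
    [C]-volume is its width, the denominator.  Hence the two conditional
    probabilities sum to at most [1] for all small [t], and so do their limits. *)

From Stdlib Require Import Reals Lra.
From Coquelicot Require Import Coquelicot.
Open Scope R_scope.

Lemma C_vol_ge0 (C : R -> R -> R) (a b c d : R) :
  is_copula C -> 0 <= a <= b -> b <= 1 -> 0 <= c <= d -> d <= 1 ->
  0 <= C_vol C a b c d.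
Proof.
  intros [_ C_2inc] Hab Hb Hcd Hd.
  unfold C_vol; apply C_2inc; lra.
Qed.

Lemma C_vol_splitr (C : R -> R -> R) (a b c d e : R) :
  C_vol C a b c e = C_vol C a b c d + C_vol C a b d e.
Proof. unfold C_vol; ring. Qed.

Lemma C_vol_strip (C : R -> R -> R) (a b : R) :
  is_copula C -> 0 <= a <= 1 -> 0 <= b <= 1 -> C_vol C a b 0 1 = b - a.
Proof.
  intros [C_margins _] Ha Hb.
  destruct (C_margins a Ha) as (Ca0 & _ & Ca1 & _).
  destruct (C_margins b Hb) as (Cb0 & _ & Cb1 & _).
  unfold C_vol; rewrite Ca0, Ca1, Cb0, Cb1; ring.
Qed.

Lemma C_vol_disjoint_le (C : R -> R -> R) (a b c0 d0 c d : R) :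
  is_copula C -> 0 <= a <= b -> b <= 1 ->
  0 <= c0 <= d0 -> d0 <= c <= d -> d <= 1 ->
  C_vol C a b c0 d0 + C_vol C a b c d <= b - a.
Proof.
  intros HC Hab Hb Hc0d0 Hd0c Hd.
  rewrite <- (C_vol_strip C a b) by (auto; lra).
  rewrite (C_vol_splitr C a b 0 c0 1), (C_vol_splitr C a b c0 d0 1),
    (C_vol_splitr C a b d0 c 1), (C_vol_splitr C a b c d 1).
  pose proof (C_vol_ge0 C a b 0 c0 HC Hab Hb ltac:(lra) ltac:(lra)).
  pose proof (C_vol_ge0 C a b d0 c HC Hab Hb ltac:(lra) ltac:(lra)).
  pose proof (C_vol_ge0 C a b d 1 HC Hab Hb ltac:(lra) ltac:(lra)).
  lra.
Qed.

Lemma pos_part_bounds (x t : R) :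
  0 <= x -> 0 <= t -> 0 <= pos_part (x - t) <= x.
Proof. intros Hx Ht; unfold pos_part, Rmax; destruct Rle_dec; lra. Qed.

Lemma neg_trunc_bounds (x t : R) :
  x <= 1 -> 0 <= t -> x <= neg_trunc (x + t) <= 1.
Proof. intros Hx Ht; unfold neg_trunc, pos_part, Rmax; destruct Rle_dec; lra. Qed.

Lemma pos_part_lt_neg_trunc (x t : R) :
  0 <= x <= 1 -> 0 < t -> pos_part (x - t) < neg_trunc (x + t).
Proof.
  intros Hx Ht; unfold neg_trunc, pos_part, Rmax; repeat destruct Rle_dec; lra.
Qed.

Lemma neg_trunc_le_pos_part (x y t : R) :
  x + t <= y - t -> neg_trunc (x + t) <= pos_part (y - t).
Proof.
  intros Hxy; unfold neg_trunc, pos_part, Rmax; repeat destruct Rle_dec; lra.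
Qed.

Lemma cond_prob_disjoint_sum_le1 (C : R -> R -> R) (p q0 q t : R) :
  is_copula C -> 0 <= p <= 1 -> 0 <= q0 <= 1 -> 0 <= q <= 1 ->
  0 < t -> q0 + t <= q - t ->
  cond_prob C p q0 t + cond_prob C p q t <= 1.
Proof.
  intros HC Hp Hq0 Hq Ht Hsep.
  pose proof (pos_part_bounds p t ltac:(lra) ltac:(lra)).
  pose proof (neg_trunc_bounds p t ltac:(lra) ltac:(lra)).
  pose proof (pos_part_lt_neg_trunc p t Hp Ht).
  pose proof (pos_part_bounds q0 t ltac:(lra) ltac:(lra)).
  pose proof (neg_trunc_bounds q0 t ltac:(lra) ltac:(lra)).
  pose proof (pos_part_bounds q t ltac:(lra) ltac:(lra)).
  pose proof (neg_trunc_bounds q t ltac:(lra) ltac:(lra)).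
  pose proof (neg_trunc_le_pos_part q0 q t Hsep).
  unfold cond_prob; rewrite <- Rdiv_plus_distr.
  apply Rcomplements.Rle_div_l; [lra |].
  rewrite Rmult_1_l; apply C_vol_disjoint_le; auto; lra.
Qed.

Lemma cond_prob_sum_le1_near0 (C : R -> R -> R) (p q0 q : R) :
  is_copula C -> 0 <= p <= 1 -> 0 <= q0 <= 1 -> 0 <= q <= 1 -> q <> q0 ->
  at_right 0 (fun t => cond_prob C p q0 t + cond_prob C p q t <= 1).
Proof.
  intros HC Hp Hq0 Hq Hne.
  assert (Hgap : 0 < Rabs (q - q0) / 2)
    by (apply Rdiv_lt_0_compat; [apply Rabs_pos_lt; lra | lra]).
  exists (mkposreal _ Hgap); simpl; intros t Hball Ht.
  change (Rabs (t - 0) < Rabs (q - q0) / 2) in Hball.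
  rewrite Rminus_0_r, (Rabs_right t) in Hball by lra.
  destruct (Rlt_or_le q0 q) as [Hlt | Hle].
  - rewrite Rabs_right in Hball by lra.
    apply cond_prob_disjoint_sum_le1; auto; lra.
  - rewrite Rabs_left1 in Hball by lra.
    rewrite Rplus_comm; apply cond_prob_disjoint_sum_le1; auto; lra.
Qed.

Lemma filterlim_plus_le {T : Type} {F : (T -> Prop) -> Prop} {FF : ProperFilter F}
    (f g : T -> R) (lf lg M : R) :
  filterlim f F (locally lf) -> filterlim g F (locally lg) ->
  F (fun x => f x + g x <= M) -> lf + lg <= M.
Proof.
  intros Hf Hg Hle.
  assert (Hsum : filterlim (fun x => f x + g x) F (locally (lf + lg)))
    by exact (filterlim_comp_2 f g Rplus Hf Hg (filterlim_plus lf lg)).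
  exact (filterlim_le (F := F) _ _ (lf + lg) M Hle Hsum (filterlim_const M)).
Qed.

Theorem proposition4 (C : R -> R -> R) (p0 q0 q l0 l : R) :
  is_copula C ->
  0 <= p0 <= 1 -> 0 <= q0 <= 1 -> 0 <= q <= 1 ->
  q <> q0 ->
  qdc_is C p0 q0 l0 -> qdc_is C p0 q l ->
  l0 + l <= 1.
Proof.
  intros HC Hp0 Hq0 Hq Hne Hl0 Hl.
  apply (filterlim_plus_le _ _ l0 l 1 Hl0 Hl).
  exact (cond_prob_sum_le1_near0 C p0 q0 q HC Hp0 Hq0 Hq Hne).
Qed.
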